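(* Let $G$ be a non-trivial graph with maximum degree $\Delta$. Then $$ \begin{aligned} \tfrac{8}{11}\, H(G) \le H(\mathcal{L}(G)) \le H(G) & \quad \text{ if } \Delta<3,\\ \tfrac{4}{\Delta+3}\, H(G) \le H(\mathcal{L}(G)) \le (\Delta-1) H(G) & \quad \text{ if } 3 \le \Delta \le 4,\\ \tfrac{3}{2\Delta-1}\, H(G) \le H(\mathcal{L}(G)) \le (\Delta-1) H(G) & \quad \text{ if } \Delta>4. \end{aligned} $$
   Context: All graphs are finite and simple. A graph is non-trivial if each of its connected components has at least two edges. $d_u$ is the degree of $u$. The harmonic index is $H(G)=\sum_{uv\in E(G)}\frac{2}{d_u+d_v}$. The line graph $\mathcal{L}(G)$ has vertex set $E(G)$, two vertices being adjacent iff the corresponding edges share an end vertex in $G$. *)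

(* A simple graph on a finite vertex type T is a
   symmetric irreflexive relation e : rel T. *)
From HB Require Import structures.
From mathcomp Require Import all_boot all_order all_algebra.
Set Implicit Arguments. Unset Strict Implicit. Unset Printing Implicit Defensive.
Import Order.TTheory GRing.Theory Num.Theory.

Section Graphs.
Variable T : finType.
Variable e : rel T.

Definition edges : {set {set T}} :=
  [set A : {set T} | [exists x, exists y, (e x y) && (A == [set x; y])]].

Definition deg (u : T) : nat := #|[set v | e u v]|.

Definition maxdeg : nat := \max_(u : T) deg u.

Definition nontrivial : Prop :=
  forall u : T,
    2 <= #|[set A in edges | A \subset [set v | connect e u v]]|.

Definition harmonic (R : fieldType) : R :=
  \sum_(A in edges) 2 / (\sum_(u in A) deg u)%:R.
End Graphs.

(* line graph: vertices are the edges of G (represented as subsets of T;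
   subsets that are not edges of G are isolated vertices of this relation
   and do not affect edges / the harmonic index), two being adjacent iff
   they are distinct edges sharing an end vertex *)
Definition line_rel (T : finType) (e : rel T) : rel {set T} :=
  fun A B => [&& A \in edges e, B \in edges e, A != B & A :&: B != set0].

(* Counting every edge from both of its ends, 2 H(G) is the sum of 2/(d_v + d_u)
   over ordered adjacent pairs (v, u), and 2 H(L(G)) is the sum of 2/(p + q) over
   paths u - v - w with u <> w, where p = d_v + d_u - 2 and q = d_v + d_w - 2 are
   the degrees of vu and vw in L(G).  Split the weight 2/(d_u + d_v) of an edge uv
   into a share beta(d_u, d_v) for each of the d_v - 1 other edges at v and a
   share beta(d_v, d_u) for each of the d_u - 1 other edges at u: then 2 H(G) is
   the sum over the same paths of beta(d_u, d_v) + beta(d_w, d_v), and each bound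
   reduces to comparing the two summands of a single path, an inequality between
   three degrees in [1, Delta].  The even split beta = 2/((p + 2) p) gives the
   upper bounds and the lower bounds for Delta < 3 and Delta > 4; for
   3 <= Delta <= 4 an edge with ends of degrees 2 and > 2 must instead give all
   its weight to the end of larger degree.  Non-triviality excludes edges with
   both ends of degree 1, whose weight could not be distributed. *)

From HB Require Import structures.
From mathcomp Require Import all_boot all_order all_algebra.
From mathcomp Require Import zify ring lra.
Import Order.TTheory GRing.Theory Num.Theory.
Set Implicit Arguments. Unset Strict Implicit. Unset Printing Implicit Defensive.
Local Open Scope ring_scope.

Definition line_deg (a b : nat) : nat := (a.-1 + b.-1)%N.

Definition hweight {R : fieldType} (m n : nat) : R := 2 / (m + n)%:R.

Section Edges.
Variables (S : finType) (r : rel S).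
Hypotheses (r_sym : symmetric r) (r_irr : irreflexive r).

Lemma in_edgesP A : reflect (exists x y, r x y /\ A = [set x; y]) (A \in edges r).
Proof.
rewrite inE; apply: (iffP existsP) => [[x /existsP[y /andP[rxy /eqP->]]]|].
  by exists x, y.
by case=> x [y [rxy ->]]; exists x; apply/existsP; exists y; rewrite rxy eqxx.
Qed.

Lemma rel_neq x y : r x y -> x != y.
Proof. by apply: contraTneq => ->; rewrite r_irr. Qed.

Lemma card_edge A : A \in edges r -> #|A| = 2%N.
Proof. by case/in_edgesP => x [y [rxy ->]]; rewrite cards2 rel_neq. Qed.

Lemma edge_of_mem A z : A \in edges r -> z \in A -> exists2 w, r z w & A = [set z; w].
Proof.
case/in_edgesP => x [y [rxy ->]] /set2P[] ->; first by exists y.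
by exists x; rewrite 1?r_sym // setUC.
Qed.

Definition edges_at z := [set A in edges r | z \in A].

Lemma in_edges_at z A : (A \in edges_at z) = (A \in edges r) && (z \in A).
Proof. by rewrite inE. Qed.

Lemma deg_gt0 x y : r x y -> (0 < deg r x)%N.
Proof. by move=> rxy; apply/card_gt0P; exists y; rewrite inE. Qed.

Lemma edges_atE z : edges_at z = [set [set z; w] | w in [set w | r z w]].
Proof.
apply/setP => A; rewrite inE; apply/andP/imsetP => [[/edge_of_mem EA /EA[w rzw ->]]|].
  by exists w; rewrite ?inE.
case=> w; rewrite inE => rzw ->; split; last exact: set21.
by apply/in_edgesP; exists z, w.
Qed.

Lemma set2_nbr_inj z : {in [set w | r z w] &, injective (fun w => [set z; w])}.
Proof.
move=> w1 w2; rewrite !inE => rzw1 rzw2 E.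
have /set2P[w21|//] : w2 \in [set z; w1] by rewrite E set22.
by move: (rel_neq rzw2); rewrite w21 eqxx.
Qed.

Lemma card_edges_at z : #|edges_at z| = deg r z.
Proof. by rewrite edges_atE card_in_imset //; apply: set2_nbr_inj. Qed.

Lemma sum_edges_at (R : nmodType) z (F : {set S} -> R) :
  \sum_(w | r z w) F [set z; w] = \sum_(A in edges_at z) F A.
Proof.
rewrite edges_atE big_imset /=; last exact: set2_nbr_inj.
by apply: eq_bigl => w; rewrite inE.
Qed.

Lemma sum_edges_pairs (R : nmodType) (F : {set S} -> R) :
  (\sum_(A in edges r) F A) *+ 2 = \sum_x \sum_(y | r x y) F [set x; y].
Proof.
under [RHS]eq_bigr do rewrite sum_edges_at.
rewrite (exchange_big_dep (mem (edges r))) => [|x A _]; last by rewrite inE => /andP[].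
rewrite -sumrMnl; apply: eq_bigr => A EA; rewrite -(card_edge EA) -sumr_const.
by apply: eq_bigl => x; rewrite inE EA.
Qed.

Lemma harmonicE (R : fieldType) :
  harmonic r R *+ 2 = \sum_x \sum_(y | r x y) hweight (deg r x) (deg r y).
Proof.
rewrite sum_edges_pairs; apply: eq_bigr => x _; apply: eq_bigr => y rxy.
by rewrite big_setU1 ?big_set1 // inE rel_neq.
Qed.

End Edges.

Section LineGraph.
Variables (T : finType) (e : rel T).
Hypotheses (e_sym : symmetric e) (e_irr : irreflexive e).
Local Notation d := (deg e).
Local Notation L := (line_rel e).

Lemma line_rel_sym : symmetric L.
Proof.
move=> A B; rewrite /line_rel.
by case: (A \in edges e); case: (B \in edges e); rewrite //= eq_sym setIC.
Qed.

Lemma line_rel_irr : irreflexive L.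
Proof. by move=> A; rewrite /line_rel eqxx !andbF. Qed.

Lemma card_line_meet A B : L A B -> #|A :&: B| = 1%N.
Proof.
case/and4P => EA EB neqAB meetAB; apply/eqP; rewrite eqn_leq card_gt0 meetAB andbT.
rewrite leqNgt; apply: contra neqAB => meet2.
have /eqP meetA : A :&: B == A by rewrite eqEcard subsetIl (card_edge e_irr EA).
by rewrite eqEcard (card_edge e_irr EA) (card_edge e_irr EB) leqnn andbT -meetA subsetIr.
Qed.

Lemma sum_line_pairs (G : nmodType) (F : {set T} -> {set T} -> G) :
  \sum_A \sum_(B | L A B) F A B =
  \sum_v \sum_(u | e v u) \sum_(w | e v w && (w != u)) F [set v; u] [set v; w].
Proof.
transitivity (\sum_v \sum_(A in edges_at e v) \sum_(B in edges_at e v | B != A) F A B).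
  rewrite pair_big_dep (eq_bigr (fun p => \sum_(v in p.1 :&: p.2) F p.1 p.2)); last first.
    by move=> p Lp; rewrite sumr_const card_line_meet.
  rewrite (exchange_big_dep xpredT) //; apply: eq_bigr => v _.
  rewrite pair_big_dep; apply: eq_bigl => -[A B] /=.
  rewrite /line_rel /edges_at !in_set.
  case vA: (v \in A); case vB: (v \in B); rewrite ?andbF //= !andbT.
  have -> : A :&: B != set0 by apply/set0Pn; exists v; rewrite inE vA vB.
  by rewrite andbT eq_sym.
apply: eq_bigr => v _; rewrite -sum_edges_at //; apply: eq_bigr => u evu.
rewrite big_mkcondr -sum_edges_at // big_mkcondr; apply: eq_bigr => w evw.
by rewrite (inj_in_eq (set2_nbr_inj e_irr (z:=v))) ?inE.
Qed.

Lemma edges_atI x y : e x y -> edges_at e x :&: edges_at e y = [set [set x; y]].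
Proof.
move=> exy; apply/setP => B; rewrite in_setI !in_edges_at in_set1.
apply/idP/eqP => [/andP[/andP[EB xB] /andP[_ yB]] | ->].
  apply/esym/eqP; rewrite eqEcard (card_edge e_irr EB) cards2 (rel_neq e_irr exy).
  by rewrite andbT; apply/subsetP => z /set2P[]->.
have -> : [set x; y] \in edges e by apply/in_edgesP; exists x, y.
by rewrite set21 set22.
Qed.

Lemma line_nbrsE x y : e x y ->
  [set B | L [set x; y] B] = (edges_at e x :|: edges_at e y) :\ [set x; y].
Proof.
move=> exy; have Exy : [set x; y] \in edges e by apply/in_edgesP; exists x, y.
have meetE B : ([set x; y] :&: B != set0) = (x \in B) || (y \in B).
  apply/set0Pn/orP => [[z /setIP[/set2P[]-> zB]]|[xB|yB]];
    by [left | right | exists x; rewrite inE set21 | exists y; rewrite inE set22].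
apply/setP => B; rewrite in_set in_setD1 in_setU !in_edges_at /line_rel Exy meetE.
by rewrite /= -andb_orr andbCA eq_sym.
Qed.

Lemma deg_line x y : e x y -> deg L [set x; y] = ((d x).-1 + (d y).-1)%N.
Proof.
move=> exy; have Exy : [set x; y] \in edges e by apply/in_edgesP; exists x, y.
have dx := deg_gt0 exy; have dy := deg_gt0 (etrans (e_sym y x) exy).
rewrite {1}/deg line_nbrsE //.
have := cardsD1 [set x; y] (edges_at e x :|: edges_at e y).
rewrite cardsU edges_atI // cards1 !card_edges_at // in_setU in_edges_at Exy set21 /=.
(* The two occurrences of this cardinal differ by a coercion, hidden from lia. *)
by move: #|_ :\ _| => k; rewrite -!subn1; lia.
Qed.

Lemma harmonic_lineE (R : fieldType) :
  harmonic L R *+ 2 = \sum_v \sum_(u | e v u) \sum_(w | e v w && (w != u))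
                        hweight (line_deg (d v) (d u)) (line_deg (d v) (d w)).
Proof.
rewrite harmonicE; [|exact: line_rel_sym|exact: line_rel_irr].
rewrite (sum_line_pairs (fun A B => hweight (deg L A) (deg L B))).
apply: eq_bigr => v _; apply: eq_bigr => u evu; apply: eq_bigr => w /andP[evw _].
by rewrite !deg_line.
Qed.

Lemma sum_shares (V : nmodType) (beta : nat -> nat -> V) :
  \sum_v \sum_(u | e v u) (beta (d u) (d v) *+ (d v).-1 + beta (d v) (d u) *+ (d u).-1) =
  \sum_v \sum_(u | e v u) \sum_(w | e v w && (w != u)) (beta (d u) (d v) + beta (d w) (d v)).
Proof.
have swap_ends : \sum_v \sum_(u | e v u) beta (d v) (d u) *+ (d u).-1 =
                 \sum_v \sum_(u | e v u) beta (d u) (d v) *+ (d v).-1.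
  rewrite (exchange_big_dep xpredT) //=; apply: eq_bigr => u _.
  by apply: eq_bigl => v; rewrite e_sym.
have swap_others v : \sum_(u | e v u) \sum_(w | e v w && (w != u)) beta (d w) (d v) =
                     \sum_(u | e v u) \sum_(w | e v w && (w != u)) beta (d u) (d v).
  rewrite (exchange_big_dep (e v)) => [|u w _ /andP[] //].
  by apply: eq_bigr => w evw; apply: eq_bigl => u; rewrite evw eq_sym; case: (e v u).
have count_others v u : e v u ->
    beta (d u) (d v) *+ (d v).-1 = \sum_(w | e v w && (w != u)) beta (d u) (d v).
  move=> evu; rewrite sumr_const; apply: congr1.
  by rewrite /deg (cardsD1 u) inE evu add1n; apply: eq_card => w; rewrite !inE andbC.
under eq_bigr => v _ do rewrite big_split /=.
rewrite big_split /= swap_ends.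
under [RHS]eq_bigr => v _ do under eq_bigr => u _ do rewrite big_split /=.
under [RHS]eq_bigr => v _ do rewrite big_split /= swap_others.
rewrite big_split /=; congr (_ + _);
  by apply: eq_bigr => v _; apply: eq_bigr => u; apply: count_others.
Qed.
End LineGraph.

Section Shares.
Variable R : realFieldType.

Definition even_share (a b : nat) : R := 2 / ((line_deg b a + 2) * line_deg b a)%:R.

Definition skew_share (a b : nat) : R :=
  if (b == 2%N) && (2 < a)%N then 0
  else if (a == 2%N) && (2 < b)%N then 2 / ((b + 2) * b.-1)%:R
  else even_share a b.

Lemma ler_frac (x y z w : R) : 0 < y -> 0 < w -> (x / y <= z / w) = (x * w <= z * y).
Proof. by move=> y0 w0; rewrite ler_pdivrMr // mulrAC ler_pdivlMr. Qed.

Lemma even_share_split a b : (0 < a)%N -> (0 < b)%N -> (3 <= a + b)%N ->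
  even_share a b *+ b.-1 + even_share b a *+ a.-1 = hweight b a.
Proof.
move=> a0 b0 ab3; rewrite /even_share /hweight /line_deg (addnC a.-1) -mulrnDr.
have -> : (b + a = b.-1 + a.-1 + 2)%N by lia.
have : (0 < b.-1 + a.-1)%N by lia.
move: (b.-1 + a.-1)%N => p p0; rewrite -mulr_natr natrM natrD.
have pR : 0 < p%:R :> R by rewrite ltr0n.
by field; rewrite !lt0r_neq0 // addr_gt0.
Qed.

Lemma hweight_le_even_shares (k p q : nat) : (0 < p)%N -> (0 < q)%N ->
  (p + 2 <= 4 * k)%N -> (q + 2 <= 4 * k)%N ->
  hweight p q <= k%:R * (2 / ((p + 2) * p)%:R + 2 / ((q + 2) * q)%:R) :> R.
Proof.
move=> p0 q0 hp hq; rewrite /hweight !natrM !natrD.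
have [P1 Q1] : 1 <= p%:R :> R /\ 1 <= q%:R :> R by rewrite !ler1n.
have [hP hQ] : p%:R + 2 <= 4 * k%:R :> R /\ q%:R + 2 <= 4 * k%:R :> R.
  by rewrite -!natrD -natrM !ler_nat.
move: (p%:R) (q%:R) (k%:R) P1 Q1 hP hQ => P Q K P1 Q1 hP hQ.
have [P0 Q0] : 0 < P /\ 0 < Q by split; lra.
rewrite addf_div ?mulf_neq0 ?lt0r_neq0 ?addr_gt0 // mulrA ler_frac ?mulr_gt0 ?addr_gt0 //.
have h1 : 0 <= (4 * K - (Q + 2)) * ((P + 2) * P * (P + Q)) by apply: mulr_ge0; nra.
have h2 : 0 <= (4 * K - (P + 2)) * ((Q + 2) * Q * (P + Q)) by apply: mulr_ge0; nra.
have h3 : 0 <= (P - Q) ^+ 2 * ((P + 2) * (Q + 2)) by apply: mulr_ge0; [exact: sqr_ge0 | nra].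
lra.
Qed.

Lemma even_shares_le_hweight (D p q : nat) : (0 < p)%N -> (0 < q)%N -> (4 <= D)%N ->
  (p <= q + D - 1)%N -> (q <= p + D - 1)%N ->
  3 / (2 * D%:R - 1) * (2 / ((p + 2) * p)%:R + 2 / ((q + 2) * q)%:R) <= hweight p q :> R.
Proof.
move=> p0 q0 D4 hpq hqp; rewrite /hweight !natrM !natrD.
have [P1 Q1 D4'] : [/\ 1 <= p%:R :> R, 1 <= q%:R :> R & 4 <= D%:R :> R].
  by rewrite !ler1n (ler_nat R 4).
have [hPQ hQP] : p%:R <= q%:R + D%:R - 1 :> R /\ q%:R <= p%:R + D%:R - 1 :> R.
  have natDB m n : (0 < n)%N -> m%:R + n%:R - 1 = (m + n - 1)%:R :> R.
    by move=> n0; rewrite natrB ?natrD // addn_gt0 n0 orbT.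
  by rewrite !natDB ?ler_nat //; lia.
move: (p%:R) (q%:R) (D%:R) P1 Q1 D4' hPQ hQP => {p q D p0 q0 D4 hpq hqp}.
move=> P Q D P1 Q1 D4 hPQ hQP.
have [P0 Q0 D0] : [/\ 0 < P, 0 < Q & 0 < 2 * D - 1] by split; lra.
rewrite addf_div ?mulf_neq0 ?lt0r_neq0 ?addr_gt0 // mulf_div.
rewrite ler_frac; [|by rewrite mulr_gt0 // !mulr_gt0 ?addr_gt0|by rewrite addr_gt0].
wlog PQ : P Q P1 Q1 hPQ hQP P0 Q0 / P <= Q.
  move=> gen; have [PQ|/ltW QP] := leP P Q; first exact: gen.
  by have := gen Q P Q1 P1 hQP hPQ Q0 P0 QP; lra.
have i1 : 0 <= (2 * ((Q + 2) * Q) - 3 * (P + Q)) * ((P + 2) * P) by apply: mulr_ge0; nra.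
have i2 : 0 <= ((D + 1) * ((P + 2) * P) - 3 * (P + Q)) * ((Q + 2) * Q).
  have : 0 <= (P - 1) * ((D + 1) * (P + 1) + 2 * D - 4) by apply: mulr_ge0; nra.
  by move=> h; apply: mulr_ge0; nra.
have i3 : 0 <= (D - 4) * ((P + 2) * P * ((Q + 2) * Q)) by apply: mulr_ge0; nra.
lra.
Qed.

Ltac share_arith := rewrite /skew_share /even_share /hweight /line_deg /= ?mulnE ?addnE /=; lra.

Lemma even_share_path_lt3 D a b x : (D < 3)%N ->
  (0 < a <= D)%N -> (1 < b <= D)%N -> (0 < x <= D)%N ->
  8 / 11 * (even_share a b + even_share x b) <= hweight (line_deg b a) (line_deg b x).
Proof.
move=> D3 /andP[a0 aD] /andP[b1 bD] /andP[x0 xD].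
have [a2 b2 x2] : [/\ a <= 2, b <= 2 & x <= 2]%N by split; lia.
by case: a a0 a2 {aD} => [|[|[|a]]] //; case: b b1 b2 {bD} => [|[|[|b]]] //;
  case: x x0 x2 {xD} => [|[|[|x]]] // *; share_arith.
Qed.

Lemma skew_share_edge D a b : (D <= 4)%N ->
  (0 < a <= D)%N -> (0 < b <= D)%N -> (3 <= a + b)%N ->
  hweight b a <= skew_share a b *+ b.-1 + skew_share b a *+ a.-1.
Proof.
move=> D4 /andP[a0 aD] /andP[b0 bD]; rewrite -[_ *+ b.-1]mulr_natr -[_ *+ a.-1]mulr_natr.
have a4 := leq_trans aD D4; have b4 := leq_trans bD D4.
by case: a a0 a4 {aD} => [|[|[|[|[|a]]]]] //; case: b b0 b4 {bD} => [|[|[|[|[|b]]]]] // *;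
  share_arith.
Qed.

Lemma skew_share_path D a b x : (3 <= D <= 4)%N ->
  (0 < a <= D)%N -> (1 < b <= D)%N -> (0 < x <= D)%N ->
  4 / (D%:R + 3) * (skew_share a b + skew_share x b) <= hweight (line_deg b a) (line_deg b x).
Proof.
move=> D34 /andP[a0 aD] /andP[b1 bD] /andP[x0 xD]; rewrite -natrD.
have [DE|DE] : (D = 3 \/ D = 4)%N by lia.
all: subst D; case: a a0 aD => [|[|[|[|[|a]]]]] //; case: b b1 bD => [|[|[|[|[|b]]]]] //;
  case: x x0 xD => [|[|[|[|[|x]]]]] // *; share_arith.
Qed.

Lemma even_share_path_upper D k a b x : (D <= 2 * k)%N ->
  (0 < a <= D)%N -> (1 < b <= D)%N -> (0 < x <= D)%N ->
  hweight (line_deg b a) (line_deg b x) <= k%:R * (even_share a b + even_share x b).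
Proof.
move=> Dk /andP[a0 aD] /andP[b1 bD] /andP[x0 xD].
by apply: hweight_le_even_shares; rewrite /line_deg; lia.
Qed.

Lemma even_share_path_gt4 D a b x : (4 < D)%N ->
  (0 < a <= D)%N -> (1 < b <= D)%N -> (0 < x <= D)%N ->
  3 / (2 * D%:R - 1) * (even_share a b + even_share x b) <=
    hweight (line_deg b a) (line_deg b x).
Proof.
move=> D4 /andP[a0 aD] /andP[b1 bD] /andP[x0 xD].
by apply: even_shares_le_hweight; rewrite /line_deg; lia.
Qed.

End Shares.

Section Transfer.
Variables (T : finType) (e : rel T) (R : realFieldType).
Hypotheses (e_sym : symmetric e) (e_irr : irreflexive e) (e_nt : nontrivial e).
Local Notation d := (deg e).
Local Notation D := (maxdeg e).

Lemma deg_le_maxdeg x : (d x <= D)%N.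
Proof. by rewrite /maxdeg (bigD1 x) //= leq_maxl. Qed.

Lemma deg_gt1 v u w : e v u -> e v w -> w != u -> (1 < d v)%N.
Proof.
move=> evu evw wu; have <- : #|[set w; u]| = 2%N by rewrite cards2 wu.
apply: subset_leq_card.
by apply/subsetP => z /set2P[]->; rewrite inE.
Qed.

Lemma deg_add_ge3 x y : e x y -> (3 <= d x + d y)%N.
Proof.
move=> exy; rewrite leqNgt; apply/negP => small.
(* Otherwise {x, y} is a connected component with a single edge. *)
have eyx : e y x by rewrite e_sym.
have nbrE z z' : e z z' -> (d z <= 1)%N -> [set w | e z w] = [set z'].
  by move=> ezz' dz; apply/eqP; rewrite eq_sym eqEcard sub1set inE ezz' cards1.
have Nx : [set w | e x w] = [set y] by apply: nbrE => //; have := deg_gt0 eyx; lia.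
have Ny : [set w | e y w] = [set x] by apply: nbrE => //; have := deg_gt0 exy; lia.
have closed_xy : closed e (mem [set x; y]).
  apply: (intro_closed (sym_connect_sym e_sym)) => a b eab /set2P[] ?; subst a.
    have: b \in [set w | e x w] by rewrite inE.
    by rewrite Nx => /set1P->; rewrite set22.
  have: b \in [set w | e y w] by rewrite inE.
  by rewrite Ny => /set1P->; rewrite set21.
have := e_nt x; apply/negP; rewrite -ltnNge ltnS -(cards1 [set x; y]).
apply/subset_leq_card/subsetP => A; rewrite in_set => /andP[EA /subsetP Ax].
have Axy : A \subset [set x; y].
  apply/subsetP => z /Ax; rewrite inE => /(closed_connect closed_xy) <-; exact: set21.
by rewrite in_set1 eqEcard Axy cards2 (rel_neq e_irr exy) (card_edge e_irr EA).
Qed.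

Lemma deg_edge_bounds v u : e v u ->
  [/\ (0 < d u <= D)%N, (0 < d v <= D)%N & (3 <= d u + d v)%N].
Proof.
move=> evu; have euv : e u v by rewrite e_sym.
by rewrite !deg_le_maxdeg (deg_gt0 evu) (deg_gt0 euv) addnC deg_add_ge3.
Qed.

Lemma deg_path_bounds v u w : e v u -> e v w -> w != u ->
  [/\ (0 < d u <= D)%N, (1 < d v <= D)%N & (0 < d w <= D)%N].
Proof.
move=> evu evw wu; rewrite !deg_le_maxdeg (deg_gt1 evu evw wu).
by rewrite (@deg_gt0 _ _ u v) ?(@deg_gt0 _ _ w v) // e_sym.
Qed.

Lemma harmonic_line_ge (c : R) (beta : nat -> nat -> R) : 0 <= c ->
  (forall a b, (0 < a <= D)%N -> (0 < b <= D)%N -> (3 <= a + b)%N ->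
     hweight b a <= beta a b *+ b.-1 + beta b a *+ a.-1) ->
  (forall a b x, (0 < a <= D)%N -> (1 < b <= D)%N -> (0 < x <= D)%N ->
     c * (beta a b + beta x b) <= hweight (line_deg b a) (line_deg b x)) ->
  c * harmonic e R <= harmonic (line_rel e) R.
Proof.
move=> c0 edge_le path_le; rewrite -(ler_pMn2r (ltn0Sn 1)) -mulrnAr.
rewrite harmonicE // harmonic_lineE //.
apply: le_trans (ler_wpM2l c0 (_ : _ <= \sum_v \sum_(u | e v u)
  (beta (d u) (d v) *+ (d v).-1 + beta (d v) (d u) *+ (d u).-1))) _.
  apply: ler_sum => v _; apply: ler_sum => u evu.
  by have [] := deg_edge_bounds evu; apply: edge_le.
rewrite sum_shares // mulr_sumr; apply: ler_sum => v _.
rewrite mulr_sumr; apply: ler_sum => u evu; rewrite mulr_sumr; apply: ler_sum => w /andP[evw wu].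
by have [] := deg_path_bounds evu evw wu; apply: path_le.
Qed.

Lemma harmonic_line_le (K : R) (beta : nat -> nat -> R) : 0 <= K ->
  (forall a b, (0 < a <= D)%N -> (0 < b <= D)%N -> (3 <= a + b)%N ->
     beta a b *+ b.-1 + beta b a *+ a.-1 <= hweight b a) ->
  (forall a b x, (0 < a <= D)%N -> (1 < b <= D)%N -> (0 < x <= D)%N ->
     hweight (line_deg b a) (line_deg b x) <= K * (beta a b + beta x b)) ->
  harmonic (line_rel e) R <= K * harmonic e R.
Proof.
move=> K0 edge_le path_le; rewrite -(ler_pMn2r (ltn0Sn 1)) -mulrnAr.
rewrite harmonic_lineE // harmonicE //.
apply: le_trans (ler_wpM2l K0 (_ : \sum_v \sum_(u | e v u)
  (beta (d u) (d v) *+ (d v).-1 + beta (d v) (d u) *+ (d u).-1) <= _)); last first.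
  apply: ler_sum => v _; apply: ler_sum => u evu.
  by have [] := deg_edge_bounds evu; apply: edge_le.
rewrite sum_shares // mulr_sumr; apply: ler_sum => v _.
rewrite mulr_sumr; apply: ler_sum => u evu; rewrite mulr_sumr; apply: ler_sum => w /andP[evw wu].
by have [] := deg_path_bounds evu evw wu; apply: path_le.
Qed.

End Transfer.

Unset Implicit Arguments.

Theorem theorem3p5 (R : realFieldType) (T : finType) (e : rel T)
  (e_sym : symmetric e) (e_irr : irreflexive e) (Hnt : nontrivial e) :
  let D := maxdeg e in
  let HG := harmonic e R in
  let HL := harmonic (line_rel e) R in
  [/\ (D < 3)%N -> 8 / 11 * HG <= HL /\ HL <= HG,
      (3 <= D <= 4)%N ->
        4 / (D%:R + 3) * HG <= HL /\ HL <= (D%:R - 1) * HG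
    & (4 < D)%N ->
        3 / (2 * D%:R - 1) * HG <= HL /\ HL <= (D%:R - 1) * HG].
Proof.
move=> D HG HL.
have even_edge a b : (0 < a <= D)%N -> (0 < b <= D)%N -> (3 <= a + b)%N ->
    hweight b a = even_share R a b *+ b.-1 + even_share R b a *+ a.-1.
  by move=> /andP[a0 _] /andP[b0 _] ab3; rewrite even_share_split.
have upper k : (D <= 2 * k)%N -> HL <= k%:R * HG.
  move=> Dk; apply: harmonic_line_le => // [a b ha hb hab|]; first by rewrite even_edge.
  by move=> a b x; apply: even_share_path_upper.
have upper_pred : (2 <= D)%N -> HL <= (D%:R - 1) * HG.
  move=> D2; have -> : D%:R - 1 = (D - 1)%:R :> R by rewrite natrB 1?ltnW.
  by apply: upper; lia.
have lower := harmonic_line_ge e_sym e_irr Hnt.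
split=> [D3 | /andP[D3 D4] | D4].
- split; last by have := upper 1%N; rewrite mul1r; apply; lia.
  apply: lower => [|a b *|a b x]; [lra | by rewrite even_edge | exact: even_share_path_lt3].
- split; last by apply: upper_pred; lia.
  apply: lower => [|a b|a b x]; first by rewrite divr_ge0 ?addr_ge0.
    exact: skew_share_edge.
  by apply: skew_share_path; rewrite D3.
split; last by apply: upper_pred; lia.
have D4' : 4 < D%:R :> R by rewrite ltr_nat.
apply: lower => [|a b *|a b x]; [by rewrite divr_ge0 //; lra | by rewrite even_edge |].
exact: even_share_path_gt4.
Qed.
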